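(* Let $P$ be a poset, let $\iota:\mathbf{JF}^+_P\to\mathbf{JF}_P$ be the inclusion, let $F_P$ send a frame-generating join-specification $\mathcal{U}$ to $\eta:P\to\mathcal{I}_{\mathcal{U}}$, $p\mapsto p^\downarrow$ (and an inclusion $\mathcal{U}_1\subseteq\mathcal{U}_2$ to the unique frame morphism $\mathcal{I}_{\mathcal{U}_1}\to\mathcal{I}_{\mathcal{U}_2}$ with $p^\downarrow\mapsto p^\downarrow$), let $G_P:\mathbf{JC}_P\to\mathbf{JF}^+_P$ send $e$ to $(\mathcal{U}_e)^-$ (arrows to inclusions), and let $G'_P:\mathbf{Frm}_P\to\mathbf{JF}^+_P$ be the restriction of $G_P$ to $\mathbf{Frm}_P$. Then $F_P\circ\iota\dashv G_P$ (with $F_P\circ\iota$ regarded as a functor $\mathbf{JF}^+_P\to\mathbf{JC}_P$), $F_P\dashv G'_P$ (with $F_P:\mathbf{JF}_P\to\mathbf{Frm}_P$ and $G'_P$ regarded as a functor into $\mathbf{JF}_P$), and $F_P\circ\iota\dashv G'_P$ (with $F_P\circ\iota:\mathbf{JF}^+_P\to\mathbf{Frm}_P$).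
   Context: A join-specification for $P$ is a set $\mathcal{U}\subseteq\wp(P)$ such that $\bigvee S$ exists in $P$ for every $S\in\mathcal{U}$ and $\{p\}\in\mathcal{U}$ for every $p\in P$. A $\mathcal{U}$-ideal is a down-closed $C$ with $\bigvee S\in C$ whenever $S\in\mathcal{U}$, $S\subseteq C$; $\mathcal{I}_{\mathcal{U}}$ is the complete lattice of $\mathcal{U}$-ideals; $\Gamma_{\mathcal{U}}(S)$ is the smallest $\mathcal{U}$-ideal containing $S$; $\mathcal{U}^+=\{S:\bigvee S\text{ exists and }\bigvee S\in\Gamma_{\mathcal{U}}(S)\}$; $\mathcal{U}$ is maximal if $\mathcal{U}=\mathcal{U}^+$ and frame-generating if $\mathcal{I}_{\mathcal{U}}$ is a frame. $\mathbf{JF}_P$ (resp. $\mathbf{JF}^+_P$) is the thin category of frame-generating (resp. maximal frame-generating) join-specifications ordered by inclusion. A join-completion of $P$ is an order embedding $e:P\to L$ into a complete lattice with every element of $L$ a join of elements of $e[P]$. $\mathbf{JC}_P$ has join-completions as objects and, as arrows $e_1\to e_2$, completely join-preserving $f:L_1\to L_2$ with $f\circ e_1=e_2$. $\mathbf{Frm}_P$ has as objects join-completions $e:P\to L$ with $L$ a frame, and as arrows $e_1\to e_2$ frame morphisms (lattice homomorphisms preserving arbitrary joins) $f:L_1\to L_2$ with $f\circ e_1=e_2$. For a join-completion $e$, $\mathcal{U}_e=\{S\subseteq P:\bigvee S\text{ exists and }e(\bigvee S)=\bigvee e[S]\}$, and for a join-specification $\mathcal{V}$, $\mathcal{V}^-$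 is the largest frame-generating join-specification contained in $\mathcal{V}$ (which exists and, for $\mathcal{V}=\mathcal{U}_e$, is maximal). *)

From Stdlib Require Import ProofIrrelevance FunctionalExtensionality PropExtensionality.
Set Implicit Arguments.
Unset Strict Implicit.

Lemma sig_eq (A : Type) (Q : A -> Prop) (x y : {a | Q a}) :
  proj1_sig x = proj1_sig y -> x = y.
Proof. destruct x as [a ha], y as [b hb]; simpl; intros ->; f_equal; apply proof_irrelevance. Qed.

Record Category := {
  Ob :> Type;
  Hom : Ob -> Ob -> Type;
  cid : forall a, Hom a a;
  ccomp : forall a b c, Hom b c -> Hom a b -> Hom a c;
  ccomp_id_l : forall a b (f : Hom a b), ccomp (cid b) f = f;
  ccomp_id_r : forall a b (f : Hom a b), ccomp f (cid a) = f;
  ccomp_assoc : forall a b c d (f : Hom c d) (g : Hom b c) (h : Hom a b),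
      ccomp f (ccomp g h) = ccomp (ccomp f g) h }.
Arguments Hom {_} _ _.
Arguments cid {_} _.
Arguments ccomp {_ _ _ _} _ _.

Record Functor (C D : Category) := {
  fob :> C -> D;
  fmap : forall a b, Hom a b -> Hom (fob a) (fob b);
  fmap_id : forall a, fmap (cid a) = cid (fob a);
  fmap_comp : forall a b c (f : Hom b c) (g : Hom a b),
      fmap (ccomp f g) = ccomp (fmap f) (fmap g) }.
Arguments fmap {_ _} _ {_ _} _.

Definition FComp (C D E : Category) (G : Functor D E) (F : Functor C D) : Functor C E.
Proof.
  refine {| fob := fun a => G (F a);
            fmap := fun a b f => fmap G (fmap F f) |}.
  - intros a; rewrite fmap_id; apply fmap_id.
  - intros a b c f g; rewrite fmap_comp; apply fmap_comp.
Defined.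

Definition Adjunction (C D : Category) (F : Functor C D) (G : Functor D C) : Prop :=
  exists (phi : forall (c : C) (d : D), Hom (F c) d -> Hom c (G d))
         (psi : forall (c : C) (d : D), Hom c (G d) -> Hom (F c) d),
    (forall c d h, psi c d (phi c d h) = h) /\
    (forall c d k, phi c d (psi c d k) = k) /\
    (forall (c c' : C) (d d' : D) (f : Hom c' c) (g : Hom d d') (h : Hom (F c) d),
        phi c' d' (ccomp g (ccomp h (fmap F f))) =
        ccomp (fmap G g) (ccomp (phi c d h) f)).

Record Poset := {
  pcar :> Type;
  ple : pcar -> pcar -> Prop;
  ple_refl : forall x, ple x x;
  ple_trans : forall x y z, ple x y -> ple y z -> ple x z;
  ple_anti : forall x y, ple x y -> ple y x -> x = y }.
Arguments ple {p} _ _.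

Section PosetDefs.
Variable L : Poset.
Definition is_ub (S : L -> Prop) (x : L) := forall s, S s -> ple s x.
Definition is_lb (S : L -> Prop) (x : L) := forall s, S s -> ple x s.
Definition is_lub (S : L -> Prop) (x : L) :=
  is_ub S x /\ forall y, is_ub S y -> ple x y.
Definition is_glb (S : L -> Prop) (x : L) :=
  is_lb S x /\ forall y, is_lb S y -> ple y x.
Definition pair (a b : L) : L -> Prop := fun t => t = a \/ t = b.
Definition complete := forall S : L -> Prop, exists x, is_lub S x.
Definition is_frame :=
  complete /\
  forall (a : L) (S : L -> Prop) (j m : L),
    is_lub S j -> is_glb (pair a j) m ->
    is_lub (fun t => exists s, S s /\ is_glb (pair a s) t) m.
End PosetDefs.

Definition image (A B : Type) (f : A -> B) (S : A -> Prop) : B -> Prop :=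
  fun y => exists x, S x /\ y = f x.

Definition join_preserving (L1 L2 : Poset) (f : L1 -> L2) :=
  forall S x, is_lub S x -> is_lub (image f S) (f x).
Definition meet_preserving (L1 L2 : Poset) (f : L1 -> L2) :=
  forall a b m, is_glb (pair a b) m -> is_glb (pair (f a) (f b)) (f m).

Lemma image_comp (A B C : Type) (f : B -> C) (g : A -> B) S :
  image f (image g S) = image (fun x => f (g x)) S.
Proof.
  apply functional_extensionality; intro y; apply propositional_extensionality;
  unfold image; split.
  - intros [b [[a [Ha ->]] ->]]; eauto.
  - intros [a [Ha ->]]; exists (g a); eauto.
Qed.

Lemma join_preserving_comp (L1 L2 L3 : Poset) (f : L2 -> L3) (g : L1 -> L2) :
  join_preserving f -> join_preserving g -> join_preserving (fun x => f (g x)).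
Proof. intros hf hg S x h; rewrite <- image_comp; apply hf, hg, h. Qed.

Lemma meet_preserving_comp (L1 L2 L3 : Poset) (f : L2 -> L3) (g : L1 -> L2) :
  meet_preserving f -> meet_preserving g -> meet_preserving (fun x => f (g x)).
Proof. intros hf hg a b m h; apply hf, hg, h. Qed.

Section JoinSpec.
Variable P : Poset.

Definition singleton (p : P) : P -> Prop := fun q => q = p.

Definition is_join_spec (U : (P -> Prop) -> Prop) :=
  (forall S, U S -> exists x, is_lub S x) /\ (forall p, U (singleton p)).

Definition is_ideal (U : (P -> Prop) -> Prop) (C : P -> Prop) :=
  (forall x y, ple x y -> C y -> C x) /\
  (forall S x, U S -> (forall s, S s -> C s) -> is_lub S x -> C x).

Definition ideal_le (U : (P -> Prop) -> Prop) (C D : {C | is_ideal U C}) :=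
  forall x, proj1_sig C x -> proj1_sig D x.

Lemma ideal_le_anti U (C D : {C | is_ideal U C}) : ideal_le C D -> ideal_le D C -> C = D.
Proof.
  intros h1 h2; apply sig_eq; apply functional_extensionality; intro x;
  apply propositional_extensionality; split; auto.
Qed.

Definition IdealPoset (U : (P -> Prop) -> Prop) : Poset :=
  {| pcar := {C | is_ideal U C};
     ple := @ideal_le U;
     ple_refl := fun C x h => h;
     ple_trans := fun C D E h1 h2 x h => h2 x (h1 x h);
     ple_anti := @ideal_le_anti U |}.

Definition Gamma (U : (P -> Prop) -> Prop) (S : P -> Prop) : P -> Prop :=
  fun x => forall C, is_ideal U C -> (forall s, S s -> C s) -> C x.

Definition Uplus (U : (P -> Prop) -> Prop) : (P -> Prop) -> Prop :=
  fun S => exists x, is_lub S x /\ Gamma U S x.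

Definition maximal (U : (P -> Prop) -> Prop) := forall S, U S <-> Uplus U S.
Definition frame_generating (U : (P -> Prop) -> Prop) := is_frame (IdealPoset U).

Lemma downset_ideal (U : (P -> Prop) -> Prop) (p : P) :
  is_ideal U (fun q => ple q p).
Proof.
  split.
  - intros x y h1 h2; exact (ple_trans h1 h2).
  - intros S x _ hS [_ hl]; apply hl; exact hS.
Qed.

Definition eta (U : (P -> Prop) -> Prop) (p : P) : IdealPoset U :=
  exist _ (fun q => ple q p) (downset_ideal U p).

Definition is_join_completion (L : Poset) (e : P -> L) :=
  complete L /\
  (forall p q, ple p q <-> ple (e p) (e q)) /\
  (forall x : L, exists S, (forall y, S y -> exists p, y = e p) /\ is_lub S x).

Definition Ue (L : Poset) (e : P -> L) : (P -> Prop) -> Prop :=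
  fun S => exists m, is_lub S m /\ is_lub (image e S) (e m).

(* V^- : the largest frame-generating join-specification contained in V,
   given as the union of all such (which is the largest one when it exists) *)
Definition minus (V : (P -> Prop) -> Prop) : (P -> Prop) -> Prop :=
  fun S => exists W, is_join_spec W /\ frame_generating W /\
                     (forall T, W T -> V T) /\ W S.

Definition JFob := {U : (P -> Prop) -> Prop | is_join_spec U /\ frame_generating U}.
Definition JFhom (U V : JFob) : Prop := forall S, proj1_sig U S -> proj1_sig V S.

Definition JFCat : Category.
Proof.
  refine {| Ob := JFob; Hom := JFhom;
            cid := fun U S h => h;
            ccomp := fun U V W (f : JFhom V W) (g : JFhom U V) S h => f S (g S h) |};
  intros; apply proof_irrelevance.
Defined.

Definition JFplusOb := {U : JFob | maximal (proj1_sig U)}.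

Definition JFplusCat : Category.
Proof.
  refine {| Ob := JFplusOb; Hom := fun U V => JFhom (proj1_sig U) (proj1_sig V);
            cid := fun U S h => h;
            ccomp := fun U V W (f : JFhom _ _) (g : JFhom _ _) S h => f S (g S h) |};
  intros; apply proof_irrelevance.
Defined.

Definition Iota : Functor JFplusCat JFCat.
Proof.
  refine {| fob := fun U : JFplusCat => (proj1_sig U : JFCat);
            fmap := fun U V (f : JFhom _ _) => f |}; reflexivity.
Defined.

Definition JCob := {L : Poset & {e : P -> L | is_join_completion e}}.
Definition jc_L (x : JCob) : Poset := projT1 x.
Definition jc_e (x : JCob) : P -> jc_L x := proj1_sig (projT2 x).

Definition JChom (x y : JCob) :=
  {f : jc_L x -> jc_L y | join_preserving f /\ forall p, f (jc_e x p) = jc_e y p}.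

Definition JCid (x : JCob) : JChom x x.
Proof.
  exists (fun z => z); split.
  - intros S z h; replace (image (fun z => z) S) with S; [exact h|].
    apply functional_extensionality; intro y; apply propositional_extensionality;
    unfold image; split; [intros; exists y; auto | intros [w [hw ->]]; exact hw].
  - reflexivity.
Defined.

Definition JCcomp (x y z : JCob) (f : JChom y z) (g : JChom x y) : JChom x z.
Proof.
  exists (fun t => proj1_sig f (proj1_sig g t)); split.
  - apply join_preserving_comp; [apply (proj2_sig f) | apply (proj2_sig g)].
  - intro p; rewrite (proj2 (proj2_sig g)); apply (proj2 (proj2_sig f)).
Defined.

Definition JCCat : Category.
Proof.
  refine {| Ob := JCob; Hom := JChom; cid := JCid; ccomp := JCcomp |};
  intros; apply sig_eq; reflexivity.
Defined.

Definition FrmOb := {x : JCob | is_frame (jc_L x)}.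
Definition FrmHom (x y : FrmOb) :=
  {h : JChom (proj1_sig x) (proj1_sig y) | meet_preserving (proj1_sig h)}.

Definition FrmCat : Category.
Proof.
  refine {| Ob := FrmOb; Hom := FrmHom;
            cid := fun x => exist (fun h : JChom _ _ => meet_preserving (proj1_sig h)) (JCid (proj1_sig x)) (fun a b m h => h);
            ccomp := fun x y z (f : FrmHom y z) (g : FrmHom x y) =>
               exist _ (JCcomp (proj1_sig f) (proj1_sig g))
                 (meet_preserving_comp (proj2_sig f) (proj2_sig g)) |};
  intros; apply sig_eq; apply sig_eq; reflexivity.
Defined.

Definition InclFrm : Functor FrmCat JCCat.
Proof.
  refine {| fob := fun x : FrmCat => (proj1_sig x : JCCat);
            fmap := fun x y (f : FrmHom x y) => proj1_sig f |}; reflexivity.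
Defined.

Definition mkFrmOb (U : (P -> Prop) -> Prop) (pf : is_join_completion (eta U))
  (fr : is_frame (IdealPoset U)) : FrmOb :=
  exist (fun x : JCob => is_frame (jc_L x))
        (existT (fun L : Poset => {e : P -> L | is_join_completion e})
                (IdealPoset U) (exist _ (eta U) pf)) fr.

End JoinSpec.

From Stdlib Require Import ProofIrrelevance FunctionalExtensionality PropExtensionality ClassicalEpsilon.
Set Implicit Arguments.
Unset Strict Implicit.

(* All the categories involved are thin: a completely join-preserving map out of a
   join-completion is determined on the join-dense image of P.  So each adjunction
   amounts to: there is a morphism from eta : P -> I_U to e iff U is contained in
   (U_e)^-.  If U is contained in U_e, then C |-> \/ e[C] is such a morphism (the
   elements whose e-image lies below a fixed b form a U-ideal), and it preserves
   binary meets when the target is a frame, since there meets distribute over the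
   join-dense generators.  Conversely such a morphism carries U-joins to e-joins.
   Finally (U_e)^- is frame-generating and maximal: being frame-generating is
   equivalent to a distributive law on principal ideals, which is inherited by
   unions of join-specifications and passes from U to U^+. *)

Lemma lub_unique (L : Poset) (S : L -> Prop) x y : is_lub S x -> is_lub S y -> x = y.
Proof. intros [h1 h2] [h3 h4]; apply ple_anti; auto. Qed.

Lemma glb_unique (L : Poset) (S : L -> Prop) x y : is_glb S x -> is_glb S y -> x = y.
Proof. intros [h1 h2] [h3 h4]; apply ple_anti; auto. Qed.

Lemma pair_comm (L : Poset) (a b : L) : pair a b = pair b a.
Proof.
  apply functional_extensionality; intro t; apply propositional_extensionality.
  unfold pair; tauto.
Qed.

Lemma complete_glb (L : Poset) : complete L -> forall S : L -> Prop, exists m, is_glb S m.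
Proof.
  intros hc S; destruct (hc (is_lb S)) as [m [h1 h2]]; exists m; split.
  - intros s hs; apply h2; intros y hy; apply hy, hs.
  - intros y hy; apply h1, hy.
Qed.

Definition sup (L : Poset) (hc : complete L) (S : L -> Prop) : L :=
  proj1_sig (constructive_indefinite_description _ (hc S)).

Lemma sup_lub (L : Poset) (hc : complete L) (S : L -> Prop) : is_lub S (sup hc S).
Proof. exact (proj2_sig (constructive_indefinite_description _ (hc S))). Qed.

Lemma image_ext_in (A B : Type) (f g : A -> B) (S : A -> Prop) :
  (forall x, S x -> f x = g x) -> image f S = image g S.
Proof.
  intro h; apply functional_extensionality; intro y; apply propositional_extensionality.
  unfold image; split; intros [x [hx ->]]; exists x; rewrite (h x hx); split; auto.
Qed.

Lemma frame_meet_le (L : Poset) : is_frame L ->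
  forall (S T : L -> Prop) js jt m z,
    is_lub S js -> is_lub T jt -> is_glb (pair js jt) m ->
    (forall s t u, S s -> T t -> is_glb (pair s t) u -> ple u z) -> ple m z.
Proof.
  intros [_ law] S T js jt m z hS hT hm hz.
  rewrite pair_comm in hm.
  apply (proj2 (law jt S js m hS hm)); intros u [s [hs hu]].
  rewrite pair_comm in hu.
  apply (proj2 (law s T jt u hT hu)); intros u' [t [ht hu']].
  exact (hz s t u' hs ht hu').
Qed.

Section Ideals.
Variable P : Poset.
Implicit Types (U V : (P -> Prop) -> Prop) (X Y : P -> Prop).

Lemma singleton_lub (p : P) : is_lub (singleton p) p.
Proof.
  split.
  - intros s ->; apply ple_refl.
  - intros b hb; apply hb; reflexivity.
Qed.

Lemma Gamma_ideal U X : is_ideal U (Gamma U X).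
Proof.
  split.
  - intros x y hxy hy C hC hX; apply (proj1 hC x y hxy), hy; auto.
  - intros S x hS hsub hl C hC hX; apply (proj2 hC S x hS); auto.
    intros s hs; apply hsub; auto.
Qed.

Lemma Gamma_incl U X x : X x -> Gamma U X x.
Proof. intros h C _ hX; auto. Qed.

Lemma Gamma_least U X (C : P -> Prop) :
  is_ideal U C -> (forall x, X x -> C x) -> forall x, Gamma U X x -> C x.
Proof. intros hC hX x hx; apply hx; auto. Qed.

Lemma Gamma_mono U X Y : (forall x, X x -> Y x) -> forall x, Gamma U X x -> Gamma U Y x.
Proof. intros h x hx C hC hY; apply hx; auto. Qed.

Lemma Gamma_spec_mono U V : (forall S, U S -> V S) -> forall X x, Gamma U X x -> Gamma V X x.
Proof.
  intros h X x hx C [hdown hjoin] hX; apply hx; auto.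
  split; [exact hdown|]; intros S y hS; apply hjoin; auto.
Qed.

Definition gen_ideal U X : IdealPoset U := exist _ (Gamma U X) (Gamma_ideal U X).

Definition ideal_union U (SS : IdealPoset U -> Prop) : P -> Prop :=
  fun x => exists C, SS C /\ proj1_sig C x.

Lemma gen_ideal_union_lub U (SS : IdealPoset U -> Prop) :
  is_lub SS (gen_ideal U (ideal_union SS)).
Proof.
  split.
  - intros C hC x hx; apply Gamma_incl; exists C; auto.
  - intros D hD x hx; apply (Gamma_least (proj2_sig D) (X := ideal_union SS)); auto.
    intros y [C [hC hy]]; exact (hD C hC y hy).
Qed.

Lemma ideal_lub_eq U (SS : IdealPoset U -> Prop) j :
  is_lub SS j -> j = gen_ideal U (ideal_union SS).
Proof. intro h; exact (lub_unique h (gen_ideal_union_lub SS)). Qed.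

Lemma ideals_complete U : complete (IdealPoset U).
Proof. intro SS; exists (gen_ideal U (ideal_union SS)); apply gen_ideal_union_lub. Qed.

Lemma inter_ideal U (a b : IdealPoset U) :
  is_ideal U (fun x => proj1_sig a x /\ proj1_sig b x).
Proof.
  destruct a as [a [ha1 ha2]], b as [b [hb1 hb2]]; simpl; split.
  - intros x y h [h1 h2]; split; eauto.
  - intros S x hS hsub hl; split; [apply (ha2 S x hS) | apply (hb2 S x hS)]; auto;
      intros s hs; apply hsub; auto.
Qed.

Definition ideal_inter U (a b : IdealPoset U) : IdealPoset U := exist _ _ (inter_ideal a b).

Lemma ideal_inter_glb U (a b : IdealPoset U) : is_glb (pair a b) (ideal_inter a b).
Proof.
  split.
  - intros s [-> | ->] x [h1 h2]; auto.
  - intros y hy x hx; split;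
      [apply (hy a (or_introl eq_refl)) | apply (hy b (or_intror eq_refl))]; auto.
Qed.

Lemma ideal_glb_iff U (a b m : IdealPoset U) :
  is_glb (pair a b) m -> forall x, proj1_sig m x <-> proj1_sig a x /\ proj1_sig b x.
Proof. intro h; rewrite (glb_unique h (ideal_inter_glb a b)); simpl; tauto. Qed.

Lemma ideal_lub_principal U (C : IdealPoset U) :
  is_lub (fun y => exists p, proj1_sig C p /\ y = eta U p) C.
Proof.
  split.
  - intros y [p [hp ->]] x hx; exact (proj1 (proj2_sig C) x p hx hp).
  - intros D hD x hx; apply (hD (eta U x)); [exists x; auto | apply ple_refl].
Qed.

Lemma eta_join_completion U : is_join_completion (eta U).
Proof.
  split; [apply ideals_complete|]; split.
  - intros p q; split.
    + intros h x hx; exact (ple_trans hx h).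
    + intro h; exact (h p (ple_refl p)).
  - intro C; exists (fun y => exists p, proj1_sig C p /\ y = eta U p); split.
    + intros y [p [_ ->]]; eauto.
    + apply ideal_lub_principal.
Qed.

Lemma eta_lub U S x : U S -> is_lub S x -> is_lub (image (eta U) S) (eta U x).
Proof.
  intros hS hl; split.
  - intros y [s [hs ->]] z hz; exact (ple_trans hz (proj1 hl s hs)).
  - intros D hD z hz.
    assert (hx : proj1_sig D x).
    { apply (proj2 (proj2_sig D) S x hS); auto.
      intros s hs; apply (hD (eta U s)); [exists s; auto | apply ple_refl]. }
    exact (proj1 (proj2_sig D) z x hz hx).
Qed.

Lemma Ue_eta_of_spec U : is_join_spec U -> forall S, U S -> Ue (eta U) S.
Proof.
  intros hjs S hS; destruct (proj1 hjs S hS) as [x hx].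
  exists x; split; [exact hx | apply eta_lub; auto].
Qed.

(* The frame law [p^↓ ∧ ⋁S = ⋁ (p^↓ ∧ s^↓)] in I_U, tested only on principal ideals. *)
Definition local_frame_law U :=
  forall S x p, U S -> is_lub S x -> ple p x ->
    Gamma U (fun y => ple y p /\ exists s, S s /\ ple y s) p.

Lemma local_frame_law_inter U : local_frame_law U ->
  forall A X, is_ideal U A -> (forall x y, ple x y -> X y -> X x) ->
  forall y, A y -> Gamma U X y -> Gamma U (fun z => A z /\ X z) y.
Proof.
  intros hF A X hA hX.
  (* The y such that every z <= y in A lies in Γ_U(A ∩ X) form a U-ideal containing X. *)
  assert (hD : is_ideal U (fun y => forall z, ple z y -> A z -> Gamma U (fun z => A z /\ X z) z)).
  { split.
    - intros x y hxy hy z hzx hz; apply hy; auto; exact (ple_trans hzx hxy).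
    - intros S x hS hsub hl z hzx hz.
      apply (Gamma_least (Gamma_ideal U _) (X := fun w => ple w z /\ exists s, S s /\ ple w s)).
      + intros w [hwz [s [hs hws]]]; apply (hsub s hs w hws); exact (proj1 hA w z hwz hz).
      + exact (hF S x z hS hl hzx). }
  intros y hy hG; refine (Gamma_least hD _ hG y (ple_refl y) hy).
  intros x hx z hzx hz; apply Gamma_incl; split; [exact hz | exact (hX z x hzx hx)].
Qed.

Lemma frame_generating_of_local_law U : local_frame_law U -> frame_generating U.
Proof.
  intro hF; split; [apply ideals_complete|].
  intros a SS j m hj hm.
  enough (E : m = gen_ideal U (ideal_union (fun t => exists s, SS s /\ is_glb (pair a s) t)))
    by (rewrite E; apply gen_ideal_union_lub).
  apply ideal_le_anti; intros x hx.
  - apply (ideal_glb_iff hm) in hx as [hax hjx].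
    rewrite (ideal_lub_eq hj) in hjx.
    apply (Gamma_mono (X := fun z => proj1_sig a z /\ ideal_union SS z)).
    + intros z [haz [s [hs hsz]]]; exists (ideal_inter a s); split.
      * exists s; split; [exact hs | apply ideal_inter_glb].
      * simpl; auto.
    + apply local_frame_law_inter; auto.
      * apply (proj2_sig a).
      * intros u v huv [C [hC hv]]; exists C; split; [exact hC|].
        exact (proj1 (proj2_sig C) u v huv hv).
  - refine (Gamma_least (proj2_sig m) _ hx).
    intros z [t [[s [hs ht]] htz]]; apply (ideal_glb_iff hm).
    apply (ideal_glb_iff ht) in htz as [h1 h2]; split; [exact h1|].
    exact (proj1 hj s hs z h2).
Qed.

Lemma local_law_of_frame_generating U : frame_generating U -> local_frame_law U.
Proof.
  intros [_ law] S x p hS hl hpx.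
  pose (SS := fun C : IdealPoset U => exists s, S s /\ C = eta U s).
  pose proof (law (eta U p) SS _ _ (gen_ideal_union_lub SS)
                  (ideal_inter_glb (eta U p) (gen_ideal U (ideal_union SS)))) as hm.
  assert (hle : ple (ideal_inter (eta U p) (gen_ideal U (ideal_union SS)))
                    (gen_ideal U (fun y => ple y p /\ exists s, S s /\ ple y s))).
  { apply (proj2 hm); intros t [C [[s [hs ->]] ht]] z hz.
    apply (ideal_glb_iff ht) in hz as [hzp hzs].
    apply Gamma_incl; split; [exact hzp | exists s; auto]. }
  apply (hle p); simpl; split; [apply ple_refl|].
  apply (proj1 (Gamma_ideal U _) p x hpx), (proj2 (Gamma_ideal U _) S x hS); auto.
  intros s hs; apply Gamma_incl; exists (eta U s); split; [exists s; auto | apply ple_refl].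
Qed.

Lemma Uplus_join_spec U : is_join_spec (Uplus U).
Proof.
  split.
  - intros S [x [hx _]]; eauto.
  - intro p; exists p; split; [apply singleton_lub | apply Gamma_incl; reflexivity].
Qed.

Lemma incl_Uplus U : is_join_spec U -> forall S, U S -> Uplus U S.
Proof.
  intros hjs S hS; destruct (proj1 hjs S hS) as [x hx]; exists x; split; [exact hx|].
  intros C hC hSC; exact (proj2 hC S x hS hSC hx).
Qed.

Lemma local_frame_law_Uplus U :
  is_join_spec U -> local_frame_law U -> local_frame_law (Uplus U).
Proof.
  intros hjs hF S x p [x' [hl' hG]] hl hpx; rewrite (lub_unique hl' hl) in hG.
  apply (Gamma_spec_mono (incl_Uplus hjs)).
  apply (local_frame_law_inter hF (A := fun z => ple z p) (X := fun y => exists s, S s /\ ple y s)).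
  - apply downset_ideal.
  - intros u v huv [s [hs hvs]]; exists s; split; [exact hs | exact (ple_trans huv hvs)].
  - apply ple_refl.
  - apply (proj1 (Gamma_ideal U _) p x hpx), (Gamma_mono (X := S)); auto.
    intros s hs; exists s; split; [exact hs | apply ple_refl].
Qed.

Definition singleton_spec : (P -> Prop) -> Prop := fun S => exists p, S = singleton p.

Lemma singleton_spec_join_spec : is_join_spec singleton_spec.
Proof.
  split.
  - intros S [p ->]; exists p; apply singleton_lub.
  - intro p; exists p; reflexivity.
Qed.

Lemma singleton_spec_frame_generating : frame_generating singleton_spec.
Proof.
  apply frame_generating_of_local_law; intros S x q [p ->] hl hqx.
  rewrite <- (lub_unique (singleton_lub p) hl) in hqx.
  apply Gamma_incl; split; [apply ple_refl | exists p; split; [reflexivity | exact hqx]].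
Qed.

Lemma minus_incl V S : minus V S -> V S.
Proof. intros [W [_ [_ [h hS]]]]; auto. Qed.

Lemma incl_minus U V : is_join_spec U -> frame_generating U ->
  (forall S, U S -> V S) -> forall S, U S -> minus V S.
Proof. intros hjs hfg h S hS; exists U; auto. Qed.

Lemma minus_mono V V' : (forall S, V S -> V' S) -> forall S, minus V S -> minus V' S.
Proof.
  intros h S [W [hjs [hfg [hW hS]]]].
  apply (incl_minus hjs hfg); auto.
Qed.

Lemma minus_local_frame_law V : local_frame_law (minus V).
Proof.
  intros S x p [W [hW [hfg [hWV hS]]]] hl hpx.
  apply (Gamma_spec_mono (U := W)).
  - intros T hT; exists W; auto.
  - exact (local_law_of_frame_generating hfg hS hl hpx).
Qed.

Lemma minus_frame_generating V : frame_generating (minus V).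
Proof. apply frame_generating_of_local_law, minus_local_frame_law. Qed.

Lemma minus_join_spec V : (forall p, V (singleton p)) -> is_join_spec (minus V).
Proof.
  intro hV; split.
  - intros S [W [hW [_ [_ hS]]]]; exact (proj1 hW S hS).
  - intro p; apply (incl_minus singleton_spec_join_spec singleton_spec_frame_generating).
    + intros T [q ->]; apply hV.
    + exists p; reflexivity.
Qed.

End Ideals.

Section JoinCompletions.
Variable P : Poset.
Implicit Types (U : (P -> Prop) -> Prop).

Lemma join_completion_monotone (L : Poset) (e : P -> L) :
  is_join_completion e -> forall p q, ple p q -> ple (e p) (e q).
Proof. intros hjc p q; apply (proj1 (proj2 hjc)). Qed.

Lemma JChom_unique (x y : JCob P) (f g : JChom x y) : f = g.
Proof.
  destruct f as [f [fj fe]], g as [g [gj ge]]; apply sig_eq; simpl.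
  apply functional_extensionality; intro z.
  destruct (proj2 (proj2 (proj2_sig (projT2 x))) z) as [S [hSe hSl]].
  assert (E : image f S = image g S).
  { apply image_ext_in; intros w hw; destruct (hSe w hw) as [p ->].
    exact (eq_trans (fe p) (eq_sym (ge p))). }
  apply (lub_unique (fj _ _ hSl)); rewrite E; exact (gj _ _ hSl).
Qed.

Lemma FrmHom_unique (x y : FrmOb P) (f g : FrmHom x y) : f = g.
Proof. apply sig_eq, JChom_unique. Qed.

Lemma Ue_singleton (L : Poset) (e : P -> L) p : Ue e (singleton p).
Proof.
  exists p; split; [apply singleton_lub|]; split.
  - intros w [s [-> ->]]; apply ple_refl.
  - intros b hb; apply hb; exists p; split; reflexivity.
Qed.

Lemma Ue_transport (L1 L2 : Poset) (e1 : P -> L1) (e2 : P -> L2) (f : L1 -> L2) :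
  join_preserving f -> (forall p, f (e1 p) = e2 p) -> forall S, Ue e1 S -> Ue e2 S.
Proof.
  intros fj fe S [m [hm hem]]; exists m; split; [exact hm|].
  pose proof (fj _ _ hem) as h; rewrite image_comp, fe in h.
  replace (fun p => f (e1 p)) with e2 in h; [exact h|].
  apply functional_extensionality; intro p; symmetry; apply fe.
Qed.

Lemma Ue_lower_ideal (L : Poset) (e : P -> L) U :
  (forall p q, ple p q -> ple (e p) (e q)) -> (forall S, U S -> Ue e S) ->
  forall b, is_ideal U (fun z => ple (e z) b).
Proof.
  intros he hU b; split.
  - intros x z hxz hz; exact (ple_trans (he x z hxz) hz).
  - intros S x hS hsub hl; destruct (hU S hS) as [m [hm hem]].
    rewrite (lub_unique hl hm); apply (proj2 hem).
    intros w [s [hs ->]]; auto.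
Qed.

Lemma Uplus_incl_Ue (L : Poset) (e : P -> L) U :
  (forall p q, ple p q -> ple (e p) (e q)) -> (forall S, U S -> Ue e S) ->
  forall S, Uplus U S -> Ue e S.
Proof.
  intros he hU S [x [hl hG]]; exists x; split; [exact hl|]; split.
  - intros w [s [hs ->]]; apply he, (proj1 hl s hs).
  - intros c hc; refine (Gamma_least (Ue_lower_ideal he hU c) _ hG).
    intros s hs; apply hc; exists s; auto.
Qed.

Lemma minus_Ue_maximal (L : Poset) (e : P -> L) :
  (forall p q, ple p q -> ple (e p) (e q)) -> maximal (minus (Ue e)).
Proof.
  intros he S.
  pose proof (minus_join_spec (Ue_singleton e)) as hjs.
  split; [apply (incl_Uplus hjs)|]; intro hS.
  apply (incl_minus (Uplus_join_spec (minus (Ue e)))); [| |exact hS].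
  - apply frame_generating_of_local_law, local_frame_law_Uplus;
      [exact hjs | apply minus_local_frame_law].
  - apply (Uplus_incl_Ue he), minus_incl.
Qed.

Section Extension.
Variables (L : Poset) (e : P -> L) (U : (P -> Prop) -> Prop).
Hypothesis hjc : is_join_completion e.
Hypothesis hU : forall S, U S -> Ue e S.

Definition eta_ext (C : IdealPoset U) : L := sup (proj1 hjc) (image e (proj1_sig C)).

Lemma eta_ext_lub C : is_lub (image e (proj1_sig C)) (eta_ext C).
Proof. apply sup_lub. Qed.

Lemma eta_ext_mono (C D : IdealPoset U) : ple C D -> ple (eta_ext C) (eta_ext D).
Proof.
  intro h; apply (proj2 (eta_ext_lub C)); intros z [x [hx ->]].
  apply (proj1 (eta_ext_lub D)); exists x; auto.
Qed.

Lemma eta_ext_eta p : eta_ext (eta U p) = e p.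
Proof.
  apply (lub_unique (eta_ext_lub _)); split.
  - intros w [x [hx ->]]; exact (join_completion_monotone hjc hx).
  - intros b hb; apply hb; exists p; split; [apply ple_refl | reflexivity].
Qed.

Lemma eta_ext_join : join_preserving eta_ext.
Proof.
  intros SS J hJ; split.
  - intros w [C [hC ->]]; apply eta_ext_mono, (proj1 hJ C hC).
  - intros b hb; apply (proj2 (eta_ext_lub J)); intros w [z [hz ->]].
    pose (K := exist _ _ (Ue_lower_ideal (join_completion_monotone hjc) hU b) : IdealPoset U).
    assert (hJK : ple J K).
    { apply (proj2 hJ); intros C hC x hx; simpl.
      apply ple_trans with (eta_ext C).
      - apply (proj1 (eta_ext_lub C)); exists x; auto.
      - apply hb; exists C; auto. }
    exact (hJK z hz).
Qed.

Lemma eta_ext_meet : is_frame L -> meet_preserving eta_ext.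
Proof.
  intros hfr a b m hm; split.
  - intros s [-> | ->]; apply eta_ext_mono, (proj1 hm); [left | right]; reflexivity.
  - intros z hz; destruct (complete_glb (proj1 hfr) (pair (eta_ext a) (eta_ext b))) as [g hg].
    apply ple_trans with g; [apply (proj2 hg), hz|].
    apply (frame_meet_le hfr (eta_ext_lub a) (eta_ext_lub b) hg).
    intros s t u [c [hc ->]] [d [hd ->]] hu.
    destruct (proj2 (proj2 hjc) u) as [S [hSe hSl]].
    apply (proj2 hSl); intros w hw; destruct (hSe w hw) as [p ->].
    assert (below : forall q, ple (e p) (e q) -> ple p q) by (intro q; apply (proj1 (proj2 hjc))).
    assert (hpm : proj1_sig m p).
    { apply (ideal_glb_iff hm); split.
      - apply (proj1 (proj2_sig a) p c); [apply below | exact hc].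
        exact (ple_trans (proj1 hSl _ hw) (proj1 hu _ (or_introl eq_refl))).
      - apply (proj1 (proj2_sig b) p d); [apply below | exact hd].
        exact (ple_trans (proj1 hSl _ hw) (proj1 hu _ (or_intror eq_refl))). }
    apply (proj1 (eta_ext_lub m)); exists p; auto.
Qed.

End Extension.

Definition eta_completion U : JCob P :=
  existT (fun L : Poset => {e : P -> L | is_join_completion e})
         (IdealPoset U) (exist _ (eta U) (eta_join_completion U)).

Definition eta_ext_hom U (y : JCob P) (hU : forall S, U S -> Ue (jc_e y) S) :
  JChom (eta_completion U) y :=
  exist _ (eta_ext (U := U) (proj2_sig (projT2 y)))
        (conj (eta_ext_join _ hU) (eta_ext_eta U _)).

Definition eta_ext_frm_hom U (fr : is_frame (IdealPoset U)) (d : FrmOb P)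
  (hU : forall S, U S -> Ue (jc_e (proj1_sig d)) S) :
  FrmHom (mkFrmOb (eta_join_completion U) fr) d :=
  exist _ (eta_ext_hom hU) (eta_ext_meet (U := U) _ (proj2_sig d)).

Lemma eta_hom_incl_minus (U : JFob P) (y : JCob P) :
  JChom (eta_completion (proj1_sig U)) y ->
  forall S, proj1_sig U S -> minus (Ue (jc_e y)) S.
Proof.
  intros [f [fj fe]]; destruct (proj2_sig U) as [hjs hfg].
  apply (incl_minus hjs hfg); intros S hS.
  exact (Ue_transport fj fe (Ue_eta_of_spec hjs hS)).
Qed.

End JoinCompletions.

Lemma thin_adjunction (C D : Category) (F : Functor C D) (G : Functor D C) :
  (forall c d (h h' : Hom (F c) d), h = h') -> (forall c d (k k' : Hom c (G d)), k = k') ->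
  (forall c d, Hom (F c) d -> Hom c (G d)) -> (forall c d, Hom c (G d) -> Hom (F c) d) ->
  Adjunction F G.
Proof. intros uF uG phi psi; exists phi, psi; repeat split; auto. Qed.

Section Functors.
Variable P : Poset.

Lemma JFhom_unique (U V : JFob P) (f g : JFhom U V) : f = g.
Proof. apply proof_irrelevance. Qed.

Definition ideal_completion_frm (U : JFCat P) : FrmCat P :=
  mkFrmOb (eta_join_completion (proj1_sig U)) (proj2 (proj2_sig U)).

Definition ideal_completion_map (U V : JFCat P) (h : Hom U V) :
  Hom (ideal_completion_frm U) (ideal_completion_frm V) :=
  eta_ext_frm_hom (d := ideal_completion_frm V) (proj2 (proj2_sig U))
    (fun S hS => Ue_eta_of_spec (proj1 (proj2_sig V)) (h S hS)).

Definition ideal_completion_functor : Functor (JFCat P) (FrmCat P).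
Proof.
  refine {| fob := ideal_completion_frm; fmap := ideal_completion_map |};
    intros; apply FrmHom_unique.
Defined.

Definition minus_Ue_spec (x : JCCat P) : JFplusCat P :=
  exist _ (exist _ (minus (Ue (jc_e x)))
                 (conj (minus_join_spec (Ue_singleton (jc_e x))) (minus_frame_generating _)))
        (minus_Ue_maximal (join_completion_monotone (proj2_sig (projT2 x)))).

Definition minus_Ue_map (x y : JCCat P) (h : Hom x y) :
  Hom (minus_Ue_spec x) (minus_Ue_spec y) :=
  fun S => minus_mono (Ue_transport (proj1 (proj2_sig h)) (proj2 (proj2_sig h))) (S := S).

Definition minus_Ue_functor : Functor (JCCat P) (JFplusCat P).
Proof.
  refine {| fob := minus_Ue_spec; fmap := minus_Ue_map |}; intros; apply JFhom_unique.
Defined.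

Lemma adjunction_JFplus_JC :
  Adjunction (FComp (InclFrm P) (FComp ideal_completion_functor (Iota P))) minus_Ue_functor.
Proof.
  apply thin_adjunction.
  - intros; apply JChom_unique.
  - intros; apply JFhom_unique.
  - intros U y h; exact (eta_hom_incl_minus h).
  - intros U y k; exact (eta_ext_hom (fun S hS => minus_incl (k S hS))).
Qed.

Lemma adjunction_JF_Frm :
  Adjunction ideal_completion_functor (FComp (Iota P) (FComp minus_Ue_functor (InclFrm P))).
Proof.
  apply thin_adjunction.
  - intros; apply FrmHom_unique.
  - intros; apply JFhom_unique.
  - intros U d h; exact (eta_hom_incl_minus (proj1_sig h)).
  - intros U d k; exact (eta_ext_frm_hom _ (fun S hS => minus_incl (k S hS))).
Qed.

Lemma adjunction_JFplus_Frm :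
  Adjunction (FComp ideal_completion_functor (Iota P)) (FComp minus_Ue_functor (InclFrm P)).
Proof.
  apply thin_adjunction.
  - intros; apply FrmHom_unique.
  - intros; apply JFhom_unique.
  - intros U d h; exact (eta_hom_incl_minus (proj1_sig h)).
  - intros U d k; exact (eta_ext_frm_hom _ (fun S hS => minus_incl (k S hS))).
Qed.

End Functors.

Theorem corollary5p14 (P : Poset) :
  exists (F : Functor (JFCat P) (FrmCat P)) (G : Functor (JCCat P) (JFplusCat P)),
    (* F_P sends U to η : P → I_U, p ↦ p^↓ *)
    (forall U : JFob P, exists pf fr, F U = @mkFrmOb P (proj1_sig U) pf fr) /\
    (* G_P sends e to (U_e)^- *)
    (forall x : JCob P, proj1_sig (proj1_sig (G x)) = minus (Ue (jc_e x))) /\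
    (* F_P ∘ ι ⊣ G_P   (JF^+_P ⇄ JC_P) *)
    Adjunction (FComp (InclFrm P) (FComp F (Iota P))) G /\
    (* F_P ⊣ G'_P      (JF_P ⇄ Frm_P) *)
    Adjunction F (FComp (Iota P) (FComp G (InclFrm P))) /\
    (* F_P ∘ ι ⊣ G'_P  (JF^+_P ⇄ Frm_P) *)
    Adjunction (FComp F (Iota P)) (FComp G (InclFrm P)).
Proof.
  exists (ideal_completion_functor P), (minus_Ue_functor P).
  split; [intro U; do 2 eexists; reflexivity|].
  split; [reflexivity|].
  split; [apply adjunction_JFplus_JC|].
  split; [apply adjunction_JF_Frm | apply adjunction_JFplus_Frm].
Qed.
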